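(* Let $\Theta$ be a family of portfolio maps $\pi:\Delta_n\to\overline{\Delta}_n$ which is totally bounded with respect to the supremum metric $\|\pi-\eta\|_\infty=\sup_{p\in\Delta_n}|\pi(p)-\eta(p)|$ (Euclidean norm $|\cdot|$), and equip $\Theta$ with the topology of uniform convergence. Suppose that for every $\pi\in\Theta$ the asymptotic growth rate $W(\pi)=\lim_{t\to\infty}\frac1t\log V_\pi(t)$ exists, and that the initial distribution $\nu_0$ (a Borel probability measure on $\Theta$) has full support on $\Theta$. Then the sequence $\{\nu_t\}_{t\ge0}$ of wealth distributions satisfies the large deviation principle on $\Theta$ with rate function $I(\pi)=W^*-W(\pi)$, where $W^*=\sup_{\pi\in\Theta}W(\pi)$.
   Context: Fix $n\ge2$. Let $\Delta_n=\{p\in(0,1)^n:\sum_i p_i=1\}$ be the open unit simplex and $\overline{\Delta}_n=\{p\in[0,1]^n:\sum_i p_i=1\}$ the closed one. The market is an arbitrary deterministic sequence $\{\mu(t)\}_{t\ge0}\subset\Delta_n$ (market weights) such that there is a constant $M>0$ with $\frac1M\le \mu_i(t+1)/\mu_i(t)\le M$ for all $1\le i\le n$, $t\ge0$. A portfolio map is a map $\pi:\Delta_n\to\overline{\Delta}_n$; its relative value is defined by $V_\pi(0)=1$ and $V_\pi(t+1)=V_\pi(t)\sum_{i=1}^n\pi_i(\mu(t))\frac{\mu_i(t+1)}{\mu_i(t)}$. For a family $\Theta$ of portfolio maps (with $(p,\pi)\mapsto\pi(p)$ jointly measurable) and a Borel probability measure $\nu_0$ on $\Theta$ (the initial distribution),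 set $\widehat V(t)=\int_\Theta V_\pi(t)\,d\nu_0(\pi)$; the wealth distribution at time $t$ is the Borel probability measure $\nu_t(B)=\frac{1}{\widehat V(t)}\int_B V_\pi(t)\,d\nu_0(\pi)$. The support of $\nu_0$ is the smallest closed set of full measure; full support means the support is $\Theta$. Large deviation principle with lower-semicontinuous rate $I:\Theta\to[0,\infty]$: for every closed $F\subset\Theta$, $\limsup_{t\to\infty}\frac1t\log\nu_t(F)\le-\inf_{F}I$, and for every open $G\subset\Theta$, $\liminf_{t\to\infty}\frac1t\log\nu_t(G)\ge-\inf_G I$. *)

From HB Require Import structures.
From mathcomp Require Import all_boot all_order all_algebra.
From mathcomp Require Import all_classical all_reals all_analysis.
From Stdlib Require List.
Set Implicit Arguments. Unset Strict Implicit. Unset Printing Implicit Defensive.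
Import Order.TTheory GRing.Theory Num.Theory.
Local Open Scope classical_set_scope.
Local Open Scope ring_scope.

Section Defs.
Variables (R : realType) (n : nat).

Definition open_simplex : set ('I_n -> R) :=
  [set p | (forall i, 0 < p i < 1) /\ \sum_(i < n) p i = 1].
Definition closed_simplex : set ('I_n -> R) :=
  [set p | (forall i, 0 <= p i <= 1) /\ \sum_(i < n) p i = 1].

Definition eucl_dist (x y : 'I_n -> R) : R :=
  Num.sqrt (\sum_(i < n) (x i - y i) ^+ 2).

Definition is_market (mu : nat -> 'I_n -> R) : Prop :=
  (forall t, open_simplex (mu t)) /\
  exists M : R, 0 < M /\ forall i t,
    M^-1 <= mu t.+1 i / mu t i <= M.

(* portfolio map Delta_n -> closed simplex (values off Delta_n are irrelevant) *)
Definition portfolio_map (f : ('I_n -> R) -> ('I_n -> R)) : Prop :=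
  forall p, open_simplex p -> closed_simplex (f p).

Fixpoint relval (mu : nat -> 'I_n -> R) (f : ('I_n -> R) -> ('I_n -> R))
    (t : nat) : R :=
  match t with
  | 0%N => 1
  | t'.+1 => relval mu f t' *
             \sum_(i < n) f (mu t') i * (mu t'.+1 i / mu t' i)
  end.

Variables (P : Type) (pi : P -> ('I_n -> R) -> ('I_n -> R)).

Definition udist (a b : P) : R :=
  sup [set eucl_dist (pi a p) (pi b p) | p in open_simplex].

Definition utotally_bounded : Prop :=
  forall e : R, 0 < e -> exists s : seq P,
    forall a, exists2 b, Stdlib.Lists.List.In b s & udist a b < e.

Definition uopen (G : set P) : Prop :=
  forall a, G a -> exists2 e : R, 0 < e & forall b, udist a b < e -> G b.
Definition uclosed (F : set P) : Prop := uopen (~` F).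

Definition ulsc (I : P -> R) : Prop :=
  forall a (c : R), c < I a ->
    exists2 e : R, 0 < e & forall b, udist a b < e -> c < I b.

End Defs.

Section Wealth.
Local Open Scope ereal_scope.
Variables (R : realType) (n : nat) (d : measure_display) (P : measurableType d).
Variables (mu : nat -> 'I_n -> R) (pi : P -> ('I_n -> R) -> ('I_n -> R))
  (nu0 : probability P R).

Definition full_support : Prop :=
  forall F : set P, uclosed pi F -> nu0 F = 1 -> F = setT.

Definition wealth_dist (t : nat) (B : set P) : R :=
  (fine (\int[nu0]_(x in B) (relval mu (pi x) t)%:E) /
   fine (\int[nu0]_(x in setT) (relval mu (pi x) t)%:E))%R.

Definition eln (x : R) : \bar R := if (0 < x)%R then (ln x)%:E else -oo.

Definition LDP (nu : nat -> set P -> R) (I : P -> R) : Prop :=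
  ulsc pi I /\
  (forall F, uclosed pi F ->
     limn_esup (fun t => eln (nu t F) * (t%:R^-1)%:E) <=
       - ereal_inf [set (I a)%:E | a in F]) /\
  (forall G, uopen pi G ->
     - ereal_inf [set (I a)%:E | a in G] <=
       limn_einf (fun t => eln (nu t G) * (t%:R^-1)%:E)).

End Wealth.

From HB Require Import structures.
From mathcomp Require Import all_boot all_order all_algebra.
From mathcomp Require Import all_classical all_reals all_analysis.
From mathcomp Require Import ring lra.
From mathcomp Require Import measurable_realfun.
Set Implicit Arguments. Unset Strict Implicit.
Import Order.TTheory GRing.Theory Num.Theory numFieldNormedType.Exports.
Local Open Scope classical_set_scope.
Local Open Scope ring_scope.

(* Write Z_t(B) for the integral of V_pi(t) over B against nu0, so that
   nu_t(B) = Z_t(B) / Z_t(Theta).  Since every one-step return lies in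
   [1/M, M], (1/t) log V_pi(t) is Lipschitz in pi for the supremum metric,
   uniformly in t; hence W is continuous and the convergence to W is locally
   uniform.  Full support gives every ball positive nu0-mass, so
   Z_t(G) >= exp(t (W(pi) - eps)) eventually for an open G containing pi;
   total boundedness reduces the supremum over F to finitely many portfolios,
   so Z_t(F) <= exp(t (sup_F W + eps)) eventually.  Dividing these bounds by
   the same bounds for Z_t(Theta) gives both large deviation inequalities. *)

Section EuclideanDistance.
Variables (R : realType) (n : nat).
Implicit Types (u v x y z : 'I_n -> R).

Lemma sumr_sqr_ge0 u : 0 <= \sum_i u i ^+ 2.
Proof. by apply: sumr_ge0 => i _; exact: sqr_ge0. Qed.

Lemma sumr_sqr_eq0 u : \sum_i u i ^+ 2 = 0 -> forall i, u i = 0.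
Proof.
move/eqP; rewrite psumr_eq0 => [/allP u0 i|i _]; last exact: sqr_ge0.
by apply/eqP; rewrite -sqrf_eq0; exact: implyP (u0 i (mem_index_enum i)) isT.
Qed.

Lemma cauchy_schwarz u v :
  \sum_i u i * v i <= Num.sqrt (\sum_i u i ^+ 2) * Num.sqrt (\sum_i v i ^+ 2).
Proof.
set A := Num.sqrt _; set B := Num.sqrt _.
have [A0 B0] : 0 <= A /\ 0 <= B by split; exact: sqrtr_ge0.
have A2 : A ^+ 2 = \sum_i u i ^+ 2 by rewrite sqr_sqrtr // sumr_sqr_ge0.
have B2 : B ^+ 2 = \sum_i v i ^+ 2 by rewrite sqr_sqrtr // sumr_sqr_ge0.
have [AB0|ABpos] := eqVneq (A * B) 0.
  have [/eqP|/eqP] : A == 0 \/ B == 0 by apply/orP; rewrite -mulf_eq0 AB0.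
  - move=> Az; have u0 : forall i, u i = 0 by apply: sumr_sqr_eq0; rewrite -A2 Az expr0n.
    by rewrite big1 ?mulr_ge0 // => i _; rewrite u0 mul0r.
  - move=> Bz; have v0 : forall i, v i = 0 by apply: sumr_sqr_eq0; rewrite -B2 Bz expr0n.
    by rewrite big1 ?mulr_ge0 // => i _; rewrite v0 mulr0.
(* Expanding [0 <= sum_i (B u_i - A v_i)^2] gives [A B (sum_i u_i v_i) <= (A B)^2]. *)
have : 0 <= \sum_i (B * u i - A * v i) ^+ 2 by exact: sumr_sqr_ge0.
have -> : \sum_i (B * u i - A * v i) ^+ 2 =
    B ^+ 2 * \sum_i u i ^+ 2 - 2 * A * B * \sum_i u i * v i + A ^+ 2 * \sum_i v i ^+ 2.
  rewrite !mulr_sumr -sumrB -big_split /=; apply: eq_bigr => i _.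
  by rewrite sqrrB !exprMn; ring.
rewrite -A2 -B2 => h.
have ABp : 0 < A * B by rewrite lt_def ABpos mulr_ge0.
rewrite -(ler_pM2l ABp); nra.
Qed.

Lemma eucl_dist_ge0 x y : 0 <= eucl_dist x y.
Proof. exact: sqrtr_ge0. Qed.

Lemma eucl_distC x y : eucl_dist x y = eucl_dist y x.
Proof. by congr Num.sqrt; apply: eq_bigr => i _; rewrite -sqrrN opprB. Qed.

Lemma eucl_distxx x : eucl_dist x x = 0.
Proof. by rewrite /eucl_dist big1 ?sqrtr0 // => i _; rewrite subrr expr0n. Qed.

Lemma ler_coord_eucl_dist x y i : `|x i - y i| <= eucl_dist x y.
Proof.
rewrite /eucl_dist -sqrtr_sqr ler_sqrt ?sumr_sqr_ge0 //.
by rewrite (bigD1 i) //= lerDl; apply: sumr_ge0 => j _; exact: sqr_ge0.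
Qed.

Lemma eucl_dist_triangle x y z : eucl_dist x z <= eucl_dist x y + eucl_dist y z.
Proof.
have := cauchy_schwarz (fun i => x i - y i) (fun i => y i - z i).
rewrite /eucl_dist; set A := Num.sqrt _; set B := Num.sqrt _ => cs.
have [A0 B0] : 0 <= A /\ 0 <= B by split; exact: sqrtr_ge0.
rewrite -[A + B]ger0_norm ?addr_ge0 // -sqrtr_sqr ler_sqrt ?sqr_ge0 //.
have -> : \sum_i (x i - z i) ^+ 2 = \sum_i (x i - y i) ^+ 2 + \sum_i (y i - z i) ^+ 2
    + 2 * \sum_i (x i - y i) * (y i - z i).
  by rewrite mulr_sumr -!big_split /=; apply: eq_bigr => i _; ring.
by rewrite sqrrD !sqr_sqrtr ?sumr_sqr_ge0 //; lra.
Qed.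

End EuclideanDistance.

Section MarketBounds.
Variables (R : realType) (n : nat) (mu : nat -> 'I_n -> R) (M : R).
Hypothesis mu_simplex : forall t, open_simplex (mu t).
Hypothesis M_gt0 : 0 < M.
Hypothesis mu_ratio : forall i t, M^-1 <= mu t.+1 i / mu t i <= M.

Definition growth_factor (f : ('I_n -> R) -> ('I_n -> R)) (t : nat) : R :=
  \sum_(i < n) f (mu t) i * (mu t.+1 i / mu t i).

Lemma relvalS f t : relval mu f t.+1 = relval mu f t * growth_factor f t.
Proof. by []. Qed.

Lemma growth_factor_bounds f t : portfolio_map f -> M^-1 <= growth_factor f t <= M.
Proof.
move=> /(_ _ (mu_simplex t)) [f01 f_sum]; rewrite /growth_factor.
apply/andP; split; [rewrite -[M^-1]mul1r | rewrite -[M]mul1r];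
  rewrite -f_sum mulr_suml; apply: ler_sum => i _; apply: ler_wpM2l;
  by [case/andP: (f01 i) | case/andP: (mu_ratio i t)].
Qed.

Lemma growth_factor_gt0 f t : portfolio_map f -> 0 < growth_factor f t.
Proof.
move=> /(growth_factor_bounds t) /andP[+ _]; apply: lt_le_trans.
by rewrite invr_gt0.
Qed.

Lemma relval_gt0 f t : portfolio_map f -> 0 < relval mu f t.
Proof.
move=> f_port; elim: t => [|t IH]; first exact: ltr01.
by rewrite relvalS mulr_gt0 // growth_factor_gt0.
Qed.

Lemma relval_le f t : portfolio_map f -> relval mu f t <= M ^+ t.
Proof.
move=> f_port; elim: t => [|t IH]; first by rewrite expr0.
rewrite relvalS exprSr ler_pM ?(ltW (relval_gt0 _ _)) ?(ltW (growth_factor_gt0 _ _)) //.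
by case/andP: (growth_factor_bounds t f_port).
Qed.

Lemma ln_relvalS f t : portfolio_map f ->
  ln (relval mu f t.+1) = ln (relval mu f t) + ln (growth_factor f t).
Proof.
by move=> f_port; rewrite relvalS lnM ?posrE ?relval_gt0 ?growth_factor_gt0.
Qed.

Lemma ln_relval_le f t : portfolio_map f -> ln (relval mu f t) <= t%:R * ln M.
Proof.
move=> f_port; elim: t => [|t IH]; first by rewrite ln1 mul0r.
rewrite ln_relvalS // mulrSr mulrDl mul1r lerD // ler_ln ?posrE ?growth_factor_gt0 //.
by case/andP: (growth_factor_bounds t f_port).
Qed.

End MarketBounds.

Lemma ln_lipschitz (R : realType) (M x y : R) : 0 < M -> M^-1 <= x -> M^-1 <= y ->
  `|ln x - ln y| <= M * `|x - y|.
Proof.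
move=> M_gt0; have Minv_gt0 : 0 < M^-1 by rewrite invr_gt0.
suff ln_sub_le u v : M^-1 <= u -> M^-1 <= v -> ln u - ln v <= M * `|u - v|.
  by move=> hx hy; rewrite ler_norml ln_sub_le // andbT lerNl opprB distrC ln_sub_le.
move=> hu hv; have u_gt0 := lt_le_trans Minv_gt0 hu; have v_gt0 := lt_le_trans Minv_gt0 hv.
(* [ln (u / v) <= u / v - 1 = (u - v) / v] and [1 / v <= M]. *)
rewrite -ln_div ?posrE //; have -> : u / v = 1 + (u / v - 1) by ring.
apply: le_trans (le_ln1Dx _) _; first by have := divr_gt0 u_gt0 v_gt0; lra.
have -> : u / v - 1 = (u - v) / v by field; rewrite gt_eqF.
apply: le_trans (ler_norm _) _; rewrite normrM normfV (gtr0_norm v_gt0) mulrC.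
by rewrite ler_wpM2r // -[M]invrK lef_pV2 ?posrE.
Qed.

Section UniformDistance.
Variables (R : realType) (n : nat) (P : Type) (pi : P -> ('I_n -> R) -> ('I_n -> R)).
Hypothesis pi_port : forall a, portfolio_map (pi a).

Let dist_set a b := [set eucl_dist (pi a p) (pi b p) | p in @open_simplex R n].

Lemma dist_set_has_sup a b (p0 : 'I_n -> R) : open_simplex p0 -> has_sup (dist_set a b).
Proof.
move=> p0_simplex; split; first by exists (eucl_dist (pi a p0) (pi b p0)), p0.
exists (Num.sqrt n%:R) => _ [p /[dup] p_simplex /(pi_port a) [a01 _] <-].
have [b01 _] := pi_port b p_simplex.
rewrite ler_sqrt // -[n in n%:R]card_ord -sumr_const; apply: ler_sum => i _.
by have /andP[? ?] := a01 i; have /andP[? ?] := b01 i; nra.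
Qed.

Lemma eucl_dist_le_udist a b p : open_simplex p ->
  eucl_dist (pi a p) (pi b p) <= udist pi a b.
Proof.
by move=> p_simplex; apply: sup_upper_bound (dist_set_has_sup a b p_simplex) _ _; exists p.
Qed.

Lemma coord_le_udist a b p i : open_simplex p -> `|pi a p i - pi b p i| <= udist pi a b.
Proof. by move=> /(eucl_dist_le_udist a b); apply: le_trans (ler_coord_eucl_dist _ _ i). Qed.

Variable p0 : 'I_n -> R.
Hypothesis p0_simplex : open_simplex p0.

Lemma udist_ge0 a b : 0 <= udist pi a b.
Proof. exact: le_trans (eucl_dist_ge0 _ _) (eucl_dist_le_udist a b p0_simplex). Qed.

Lemma udistC a b : udist pi a b = udist pi b a.
Proof.
rewrite /udist; congr sup.
by apply/seteqP; split => _ [p p_simplex <-]; exists p; rewrite // eucl_distC.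
Qed.

Lemma udistxx a : udist pi a a = 0.
Proof.
apply/eqP; rewrite eq_le udist_ge0 andbT.
apply: ge_sup => [|_ [p _ <-]]; last by rewrite eucl_distxx.
by exists 0, p0; rewrite ?eucl_distxx.
Qed.

Lemma udist_triangle a b c : udist pi a c <= udist pi a b + udist pi b c.
Proof.
apply: ge_sup => [|_ [p p_simplex <-]]; first by exists (eucl_dist (pi a p0) (pi c p0)), p0.
apply: le_trans (eucl_dist_triangle _ (pi b p) _) _.
by apply: lerD; exact: eucl_dist_le_udist.
Qed.

End UniformDistance.

Section RelvalLipschitz.
Variables (R : realType) (n : nat) (mu : nat -> 'I_n -> R) (M : R).
Hypothesis mu_simplex : forall t, open_simplex (mu t).
Hypothesis M_gt0 : 0 < M.
Hypothesis mu_ratio : forall i t, M^-1 <= mu t.+1 i / mu t i <= M.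
Variables (P : Type) (pi : P -> ('I_n -> R) -> ('I_n -> R)).
Hypothesis pi_port : forall a, portfolio_map (pi a).

Lemma growth_factor_lipschitz a b t :
  `|growth_factor mu (pi a) t - growth_factor mu (pi b) t| <= n%:R * M * udist pi a b.
Proof.
rewrite /growth_factor -sumrB; apply: le_trans (ler_norm_sum _ _ _) _.
rewrite -[n in n%:R]card_ord -sumr_const !mulr_suml; apply: ler_sum => i _.
rewrite -mulrBl normrM mul1r mulrC.
have /andP[ratio_ge ratio_le] := mu_ratio i t.
have ratio_ge0 : 0 <= mu t.+1 i / mu t i by apply: le_trans ratio_ge; rewrite invr_ge0 ltW.
by rewrite ger0_norm // ler_pM // coord_le_udist.
Qed.

Lemma ln_relval_lipschitz a b t :
  `|ln (relval mu (pi a) t) - ln (relval mu (pi b) t)|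
    <= t%:R * (n%:R * M ^+ 2) * udist pi a b.
Proof.
elim: t => [|t IH]; first by rewrite subrr normr0 !mul0r.
rewrite !(ln_relvalS mu_simplex M_gt0 mu_ratio) // opprD addrACA.
apply: le_trans (ler_normD _ _) _; rewrite mulrSr !mulrDl mul1r lerD //.
have /andP[ga _] := growth_factor_bounds mu_simplex mu_ratio t (pi_port a).
have /andP[gb _] := growth_factor_bounds mu_simplex mu_ratio t (pi_port b).
apply: le_trans (ln_lipschitz M_gt0 ga gb) _.
have -> : n%:R * M ^+ 2 * udist pi a b = M * (n%:R * M * udist pi a b) by ring.
by rewrite ler_wpM2l ?(ltW M_gt0) // growth_factor_lipschitz.
Qed.

End RelvalLipschitz.

Section ExtendedRealBounds.
Variable R : realType.
Local Open Scope ereal_scope.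
Implicit Types (x y : \bar R) (u : (\bar R)^nat).

Lemma lee_EFin_gt x y : (forall r : R, y < r%:E -> x <= r%:E) -> x <= y.
Proof.
case: y => [y | | ] x_le.
- by apply/lee_addgt0Pr => e e_gt0; rewrite x_le ?lte_fin ?ltrDl.
- exact: leey.
- case: x x_le => [x | | ] x_le //.
    by have := x_le (x - 1)%R (ltNyr _); rewrite lee_fin leNgt ltrBlDr ltrDl ltr01.
  by have := x_le 0%R (ltNyr _).
Qed.

Lemma gee_EFin_lt x y : (forall r : R, r%:E < y -> r%:E <= x) -> y <= x.
Proof.
move=> x_ge; rewrite -leeN2; apply: lee_EFin_gt => r.
by rewrite lteNl leeNl -EFinN; exact: x_ge.
Qed.

Lemma lte_EFin_gap (r : R) y : r%:E < y -> exists2 q : R, (r < q)%R & q%:E <= y.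
Proof.
case: y => [y | | ] //; first by exists y; rewrite // -lte_fin.
by exists (r + 1)%R; rewrite ?leey // ltrDl.
Qed.

Lemma limn_esup_le_near u y : (\forall t \near \oo, u t <= y) -> limn_esup u <= y.
Proof.
move=> [N _ u_le]; rewrite limn_esup_lim; apply: lime_le; first exact: is_cvg_esups.
exists N => // m /= Nm; apply: ge_ereal_sup => _ [k /= mk <-].
exact/u_le/(leq_trans Nm mk).
Qed.

Lemma limn_einf_ge_near u y : (\forall t \near \oo, y <= u t) -> y <= limn_einf u.
Proof.
move=> [N _ u_ge]; rewrite limn_einf_lim; apply: lime_ge; first exact: is_cvg_einfs.
exists N => // m /= Nm; apply: le_ereal_inf_tmp => _ [k /= mk <-].
exact/u_ge/(leq_trans Nm mk).
Qed.

Lemma eln_div_le (x r : R) (t : nat) : (0 < t)%N -> (x <= expR (t%:R * r))%R ->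
  eln x * (t%:R^-1)%:E <= r%:E.
Proof.
move=> t_gt0 x_le; rewrite /eln; case: ifPn => [x_gt0|_].
  by rewrite -EFinM lee_fin ler_pdivrMr ?ltr0n // mulrC -ler_expR lnK ?posrE.
by rewrite mulNyr gtr0_sg ?invr_gt0 ?ltr0n // mul1e leNye.
Qed.

Lemma eln_div_ge (x r : R) (t : nat) : (0 < t)%N -> (expR (t%:R * r) <= x)%R ->
  r%:E <= eln x * (t%:R^-1)%:E.
Proof.
move=> t_gt0 x_ge; have x_gt0 := lt_le_trans (expR_gt0 _) x_ge.
by rewrite /eln x_gt0 -EFinM lee_fin ler_pdivlMr ?ltr0n // mulrC -ler_expR lnK ?posrE.
Qed.

End ExtendedRealBounds.

Lemma near_forall_In {T U : Type} (F : set_system T) {FF : Filter F} (s : seq U)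
    (Q : U -> T -> Prop) :
  (forall b, List.In b s -> \forall t \near F, Q b t) ->
  \forall t \near F, forall b, List.In b s -> Q b t.
Proof.
elim: s => [|b s IH] Q_near; first by apply: nearW => t b [].
apply: filterS2 (Q_near b (or_introl erefl)) (IH (fun c sc => Q_near c (or_intror sc))).
by move=> t Qb Qs c [<-|/Qs].
Qed.

Lemma expR_le_near (R : realType) (q e : R) : 0 < q -> 0 < e ->
  \forall t \near \oo, expR (- (t%:R * e)) <= q.
Proof.
move=> q_gt0 e_gt0; apply: filterS (nbhs_infty_ger (- ln q / e)) => t.
by rewrite ler_pdivrMr // lerNl => h; rewrite -[q]lnK ?posrE // ler_expR.
Qed.

Lemma div_le_expRB (R : realType) (x y a b : R) :
  0 <= x -> x <= expR a -> expR b <= y -> x / y <= expR (a - b).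
Proof.
move=> x_ge0 x_le y_ge; have y_gt0 := lt_le_trans (expR_gt0 b) y_ge.
by rewrite expRB ler_pM // ?invr_ge0 ?(ltW y_gt0) // lef_pV2 ?posrE ?expR_gt0.
Qed.

Lemma expRB_le_div (R : realType) (x y a b : R) :
  expR a <= x -> 0 < y -> y <= expR b -> expR (a - b) <= x / y.
Proof.
move=> x_ge y_gt0 y_le.
by rewrite expRB ler_pM ?expR_ge0 ?invr_ge0 ?expR_ge0 // lef_pV2 ?posrE ?expR_gt0.
Qed.

Section WealthDistribution.
Variables (R : realType) (n : nat) (mu : nat -> 'I_n -> R) (M : R).
Hypothesis mu_simplex : forall t, open_simplex (mu t).
Hypothesis M_gt0 : 0 < M.
Hypothesis mu_ratio : forall i t, M^-1 <= mu t.+1 i / mu t i <= M.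
Variables (d : measure_display) (P : measurableType d).
Variable pi : P -> ('I_n -> R) -> ('I_n -> R).
Hypothesis pi_port : forall a, portfolio_map (pi a).
Hypothesis pi_tbounded : utotally_bounded pi.
Hypothesis measurable_borel : @measurable d P = <<s uopen pi >>.
Variable nu0 : probability P R.
Hypothesis nu0_support : full_support pi nu0.
Variable W : P -> R.
Hypothesis W_growth :
  forall a, (fun t : nat => ln (relval mu (pi a) t) / t%:R) @ \oo --> W a.

Local Notation V a t := (relval mu (pi a) t).
Local Notation ud := (udist pi).
Local Notation uball a e := [set b | ud a b < e].

Lemma relval_expR_ln a t : V a t = expR (ln (V a t)).
Proof. by rewrite lnK // posrE (relval_gt0 mu_simplex M_gt0 mu_ratio). Qed.

Lemma uopen_ball a e : uopen pi (uball a e).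
Proof.
move=> b /= ab; exists (e - ud a b) => [|c bc /=]; first by rewrite subr_gt0.
by apply: le_lt_trans (udist_triangle pi_port (mu_simplex 0) a b c) _; rewrite -ltrBrDl.
Qed.

Lemma measurable_uopen G : uopen pi G -> measurable G.
Proof. by rewrite measurable_borel; exact: sub_sigma_algebra. Qed.

Lemma measurable_uclosed F : uclosed pi F -> measurable F.
Proof. by move=> /measurable_uopen/measurableC; rewrite setCK. Qed.

Lemma measurable_lipschitz (g : P -> R) (C : R) : 0 <= C ->
  (forall a b, `|g a - g b| <= C * ud a b) -> measurable_fun setT g.
Proof.
move=> C_ge0 g_lip.
have R_open_gen : @measurable _ R = <<s [set A | exists x y, A = `]x, y[%classic] >>.
  exact: RGenOpens.measurableE.
apply: (measurability _ R_open_gen).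
move=> _ [_ [x [y ->]] <-]; apply: measurable_uopen => a [_ /=].
rewrite in_itv /= => /andP[xa ay]; set r := Num.min (g a - x) (y - g a).
have r_gt0 : 0 < r by rewrite lt_min !subr_gt0 xa ay.
exists (r / (C + 1)) => [|b ab]; first by rewrite divr_gt0 // ltr_wpDl.
have ud_ge0 := udist_ge0 pi_port (mu_simplex 0) a b.
have : C * ud a b < r.
  apply: le_lt_trans (_ : _ <= (C + 1) * ud a b) _; first by rewrite ler_wpM2r // lerDl.
  by rewrite mulrC -ltr_pdivlMr // ltr_wpDl.
have /ler_normlP[gab gba] := g_lip a b.
have [r_le1 r_le2] : r <= g a - x /\ r <= y - g a by rewrite !ge_min !lexx ?orbT.
by move=> ?; split => //=; rewrite in_itv /=; apply/andP; split; lra.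
Qed.

Lemma measurable_relval t : measurable_fun setT (fun a => V a t).
Proof.
have -> : (fun a => V a t) = expR \o (fun a => ln (V a t)).
  by apply/funext => a; rewrite /= -relval_expR_ln.
apply: measurableT_comp (@measurable_expR R) _.
apply: (measurable_lipschitz (C := t%:R * (n%:R * M ^+ 2))).
  by rewrite !mulr_ge0 ?exprn_ge0 ?ler0n ?ltW.
by move=> a b; exact: (ln_relval_lipschitz mu_simplex M_gt0 mu_ratio pi_port).
Qed.

(* Full support: a null ball would have a closed complement of full measure. *)
Lemma ball_measure_gt0 a e : 0 < e -> 0 < fine (nu0 (uball a e)).
Proof.
move=> e_gt0; have ball_meas := measurable_uopen (@uopen_ball a e).
apply: fine_gt0; rewrite (le_lt_trans (probability_le1 _ ball_meas)) ?ltry // andbT.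
rewrite lt_def measure_ge0 andbT; apply/negP => /eqP ball0.
have compl1 : nu0 (~` uball a e) = 1%E by rewrite probability_setC // ball0 sube0.
have := nu0_support _ compl1; rewrite /uclosed setCK => /(_ (@uopen_ball a e)) ballC.
have : (~` uball a e) a by rewrite ballC.
by apply; rewrite /= (udistxx pi_port (mu_simplex 0)).
Qed.

Lemma ln_relval_equicont e : 0 < e -> exists2 del, 0 < del &
  forall a b t, ud a b < del -> `|ln (V a t) - ln (V b t)| <= t%:R * e.
Proof.
move=> e_gt0; set L := n%:R * M ^+ 2.
have L_ge0 : 0 <= L by rewrite mulr_ge0 ?ler0n ?exprn_ge0 ?ltW.
exists (e / (L + 1)) => [|a b t]; first by rewrite divr_gt0 // ltr_wpDl.
rewrite ltr_pdivlMr ?ltr_wpDl // => ab.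
apply: le_trans (ln_relval_lipschitz mu_simplex M_gt0 mu_ratio pi_port a b t) _.
have := udist_ge0 pi_port (mu_simplex 0) a b.
by rewrite -mulrA ler_wpM2l // -/L; nra.
Qed.

Lemma ln_relval_near a e : 0 < e ->
  \forall t \near \oo, t%:R * (W a - e) <= ln (V a t) <= t%:R * (W a + e).
Proof.
move=> e_gt0; have /cvgrPdist_lt/(_ e e_gt0) := @W_growth a.
apply: filterS2 (nbhs_infty_gt 0) => t t_gt0; rewrite ltr_distlC => /andP[lo hi].
have t_pos : 0 < t%:R :> R by rewrite ltr0n.
rewrite -[ln _](divfK (lt0r_neq0 t_pos)) [_ / _ * _]mulrC.
by rewrite !ler_pM2l // !ltW.
Qed.

Lemma W_le_lnM a : W a <= ln M.
Proof.
apply/ler_addgt0Pr => e e_gt0.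
have [t [t_gt0 /andP[W_le _]]] :=
  filter_ex (filterI (nbhs_infty_gt 0) (ln_relval_near a e_gt0)).
have := le_trans W_le (ln_relval_le mu_simplex M_gt0 mu_ratio t (pi_port a)).
by rewrite ler_pM2l ?ltr0n //; lra.
Qed.

Lemma W_has_sup : has_sup (range W).
Proof.
split; last by exists (ln M) => _ [a _ <-]; exact: W_le_lnM.
have [a _] : [set: P] !=set0.
  apply/set0P/negP => /eqP P0; have := probability_setT nu0.
  by rewrite P0 measure0 => /eqP; rewrite eq_sym eqe oner_eq0.
by exists (W a), a.
Qed.

Lemma W_le_sup a : W a <= sup (range W).
Proof. by apply: sup_upper_bound W_has_sup _ _; exists a. Qed.

Lemma W_le_close e : 0 < e -> exists2 del, 0 < del &
  forall a b, ud a b < del -> W b <= W a + e.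
Proof.
move=> e_gt0; have e3_gt0 : 0 < e / 3 by rewrite divr_gt0.
have [del del_gt0 equi] := ln_relval_equicont e3_gt0.
exists del => // a b ab.
have [t [t_gt0 [/andP[_ a_le] /andP[b_ge _]]]] := filter_ex (filterI (nbhs_infty_gt 0)
  (filterI (ln_relval_near a e3_gt0) (ln_relval_near b e3_gt0))).
have := equi a b t ab; rewrite ler_norml => /andP[ab_ge _].
have : t%:R * (W b - e / 3) <= t%:R * (W a + e / 3 + e / 3) by rewrite [leRHS]mulrDr; lra.
by rewrite ler_pM2l ?ltr0n //; lra.
Qed.

Definition wealth_on t (B : set P) : R := fine (\int[nu0]_(x in B) (V x t)%:E).

Lemma integral_relval_le t B c : measurable B -> 0 <= c ->
  (forall x, B x -> V x t <= c) -> (\int[nu0]_(x in B) (V x t)%:E <= c%:E)%E.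
Proof.
move=> B_meas c_ge0 V_le.
have int_le : (\int[nu0]_(x in B) (V x t)%:E <= c%:E * nu0 B)%E.
  rewrite -integral_cst //; apply: ge0_le_integral => //.
  - by move=> x _; rewrite lee_fin ltW // (relval_gt0 mu_simplex M_gt0 mu_ratio).
  - exact/measurable_EFinP/(measurable_funS measurableT)/measurable_relval.
apply: le_trans int_le _.
by rewrite -[leRHS]mule1 lee_wpmul2l ?lee_fin // probability_le1.
Qed.

Lemma integral_relvalE t B : measurable B ->
  (\int[nu0]_(x in B) (V x t)%:E = (wealth_on t B)%:E)%E.
Proof.
move=> B_meas; rewrite fineK // ge0_fin_numE.
  apply: le_lt_trans (integral_relval_le (c := M ^+ t) B_meas _ _) (ltry _).
    by rewrite exprn_ge0 ?ltW.
  by move=> x _; exact: (relval_le mu_simplex M_gt0 mu_ratio).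
apply: integral_ge0 => x _.
by rewrite lee_fin ltW // (relval_gt0 mu_simplex M_gt0 mu_ratio).
Qed.

Lemma wealth_on_le t B c : measurable B -> 0 <= c ->
  (forall x, B x -> V x t <= c) -> wealth_on t B <= c.
Proof.
by move=> B_meas c_ge0 V_le; rewrite -lee_fin -integral_relvalE // integral_relval_le.
Qed.

Lemma wealth_on_ge t B c : measurable B -> 0 <= c ->
  (forall x, B x -> c <= V x t) -> c * fine (nu0 B) <= wealth_on t B.
Proof.
move=> B_meas c_ge0 V_ge.
rewrite -lee_fin -integral_relvalE // EFinM fineK ?fin_num_measure //.
rewrite -integral_cst //; apply: ge0_le_integral => //.
exact/measurable_EFinP/(measurable_funS measurableT)/measurable_relval.
Qed.

Lemma wealth_on_subset t B C : measurable B -> measurable C -> B `<=` C ->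
  wealth_on t B <= wealth_on t C.
Proof.
move=> B_meas C_meas BC; rewrite -lee_fin -!integral_relvalE //.
apply: ge0_subset_integral => //.
  exact/measurable_EFinP/(measurable_funS measurableT)/measurable_relval.
by move=> x _; rewrite lee_fin ltW // (relval_gt0 mu_simplex M_gt0 mu_ratio).
Qed.

(* Total boundedness reduces the supremum over [F] to finitely many witnesses:
   one point of [F] near each point of a [del / 2]-net that is close to [F]. *)
Lemma ln_relval_unif_le (F : set P) (w e : R) : 0 < e ->
  (forall a, F a -> W a <= w) ->
  \forall t \near \oo, forall x, F x -> ln (V x t) <= t%:R * (w + e).
Proof.
move=> e_gt0 F_le; have e2_gt0 : 0 < e / 2 by rewrite divr_gt0.
have [del del_gt0 equi] := ln_relval_equicont e2_gt0.
have [s s_net] := pi_tbounded (divr_gt0 del_gt0 (ltr0n R 2)).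
have witness (b : P) : \forall t \near \oo, (exists c, F c /\ ud c b < del / 2) ->
    exists c, [/\ F c, ud c b < del / 2 & ln (V c t) <= t%:R * (w + e / 2)].
  have [[c [Fc cb]] | no_c] := pselect (exists c, F c /\ ud c b < del / 2).
    apply: filterS (ln_relval_near c e2_gt0) => t /andP[_ c_le] _; exists c; split => //.
    by apply: le_trans c_le _; rewrite ler_wpM2l // lerD2r F_le.
  by apply: nearW => t /no_c.
apply: filterS (near_forall_In (fun b _ => witness b)) => t net_t x Fx.
have [b sb xb] := s_net x.
have [c [Fc cb c_le]] := net_t b sb (ex_intro _ x (conj Fx xb)).
have cx : ud c x < del.
  apply: le_lt_trans (udist_triangle pi_port (mu_simplex 0) c b x) _.
  by rewrite (udistC pi b x); lra.
have := equi c x t cx; rewrite ler_norml => /andP[x_le _].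
by rewrite ?mulrDr ?mulrA in c_le x_le *; lra.
Qed.

Lemma wealth_on_ge0 t B : 0 <= wealth_on t B.
Proof.
apply/fine_ge0/integral_ge0 => x _.
by rewrite lee_fin ltW // (relval_gt0 mu_simplex M_gt0 mu_ratio).
Qed.

Lemma wealth_on_le_near (F : set P) (w e : R) : measurable F -> 0 < e ->
  (forall a, F a -> W a <= w) ->
  \forall t \near \oo, wealth_on t F <= expR (t%:R * (w + e)).
Proof.
move=> F_meas e_gt0 F_le; apply: filterS (ln_relval_unif_le e_gt0 F_le) => t V_le.
apply: wealth_on_le => // x Fx.
by rewrite relval_expR_ln ler_expR V_le.
Qed.

Lemma wealth_on_ge_near (G : set P) a (e : R) : uopen pi G -> G a -> 0 < e ->
  \forall t \near \oo, expR (t%:R * (W a - e)) <= wealth_on t G.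
Proof.
move=> G_open Ga e_gt0; have e3_gt0 : 0 < e / 3 by rewrite divr_gt0.
have [r r_gt0 ballG] := G_open a Ga.
have [del del_gt0 equi] := ln_relval_equicont e3_gt0.
set B := uball a (Num.min r del).
have B_meas : measurable B := measurable_uopen (@uopen_ball a _).
have BG : B `<=` G by move=> b; rewrite /B /= lt_min => /andP[ab _]; exact: ballG.
have q_gt0 : 0 < fine (nu0 B) by apply: ball_measure_gt0; rewrite lt_min r_gt0.
apply: filterS2 (ln_relval_near a e3_gt0) (expR_le_near q_gt0 e3_gt0).
move=> t /andP[a_ge _] q_ge.
set c := t%:R * (W a - e / 3) - t%:R * (e / 3).
apply: le_trans (wealth_on_subset t B_meas (measurable_uopen G_open) BG).
apply: le_trans (wealth_on_ge (c := expR c) B_meas (expR_ge0 _) _).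
  apply: le_trans (ler_wpM2l (expR_ge0 c) q_ge); rewrite -expRD ler_expR /c.
  by rewrite ?mulrDr ?mulrBr ?mulrN ?mulrA; lra.
move=> x; rewrite /B /= lt_min => /andP[_ ax]; rewrite relval_expR_ln ler_expR.
by have := equi a x t ax; rewrite ler_norml /c => /andP[_ ax_le]; lra.
Qed.

Lemma uopen_setT : uopen pi [set: P].
Proof. by move=> a _; exists 1. Qed.

Lemma wealth_distE t B : wealth_dist mu pi nu0 t B = wealth_on t B / wealth_on t setT.
Proof. by []. Qed.

Lemma wealth_dist_le_near (F : set P) (w e : R) : measurable F -> 0 < e ->
  (forall a, F a -> W a <= w) ->
  \forall t \near \oo,
    wealth_dist mu pi nu0 t F <= expR (t%:R * (w - sup (range W) + e)).
Proof.
move=> F_meas e_gt0 F_le; have e3_gt0 : 0 < e / 3 by rewrite divr_gt0.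
have [_ [a0 _ <-] a0_gt] := sup_adherent e3_gt0 W_has_sup.
apply: filterS2 (wealth_on_le_near F_meas e3_gt0 F_le)
  (wealth_on_ge_near uopen_setT (a := a0) I e3_gt0) => t F_le' T_ge.
rewrite wealth_distE; apply: le_trans (div_le_expRB (wealth_on_ge0 t F) F_le' T_ge) _.
have := ler_wpM2l (ler0n R t) (ltW a0_gt).
by rewrite ler_expR ?mulrDr ?mulrBr ?mulrN ?mulrA; lra.
Qed.

Lemma wealth_dist_ge_near (G : set P) a (e : R) : uopen pi G -> G a -> 0 < e ->
  \forall t \near \oo,
    expR (t%:R * (W a - sup (range W) - e)) <= wealth_dist mu pi nu0 t G.
Proof.
move=> G_open Ga e_gt0; have e2_gt0 : 0 < e / 2 by rewrite divr_gt0.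
apply: filterS2 (wealth_on_ge_near G_open Ga e2_gt0)
  (wealth_on_le_near measurableT e2_gt0 (fun b _ => W_le_sup b)) => t G_ge T_le.
have T_gt0 : 0 < wealth_on t setT.
  apply: lt_le_trans (expR_gt0 _) (le_trans G_ge _).
  exact: wealth_on_subset (measurable_uopen G_open) measurableT (@subsetT _ G).
rewrite wealth_distE; apply: le_trans (expRB_le_div G_ge T_gt0 T_le).
by rewrite ler_expR ?mulrDr ?mulrBr ?mulrN ?mulrA; lra.
Qed.

Lemma rate_ulsc : ulsc pi (fun a => sup (range W) - W a).
Proof.
move=> a c c_lt.
have e_gt0 : 0 < (sup (range W) - W a - c) / 2 by rewrite divr_gt0 ?subr_gt0.
have [del del_gt0 W_close] := W_le_close e_gt0.
by exists del => // b ab; have := W_close a b ab; lra.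
Qed.

Local Open Scope ereal_scope.

Lemma LDP_upper (F : set P) : uclosed pi F ->
  limn_esup (fun t => eln (wealth_dist mu pi nu0 t F) * (t%:R^-1)%:E) <=
    - ereal_inf [set (sup (range W) - W a)%:E | a in F].
Proof.
move=> F_closed; apply: lee_EFin_gt => r.
rewrite lteNl -EFinN => /lte_EFin_gap[q rq q_le].
have F_le a : F a -> (W a <= sup (range W) - q)%R.
  move=> Fa; have : q%:E <= (sup (range W) - W a)%:E.
    by apply: le_trans q_le (ereal_inf_lbound _); exists a.
  by rewrite lee_fin; lra.
have e_gt0 : (0 < r + q)%R by lra.
apply: limn_esup_le_near.
have F_meas := measurable_uclosed F_closed.
apply: filterS2 (nbhs_infty_gt 0) (wealth_dist_le_near F_meas e_gt0 F_le).
move=> t t_gt0 nu_le; apply: eln_div_le => //; apply: le_trans nu_le _.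
by rewrite ler_expR ler_wpM2l //; lra.
Qed.

Lemma LDP_lower (G : set P) : uopen pi G ->
  - ereal_inf [set (sup (range W) - W a)%:E | a in G] <=
    limn_einf (fun t => eln (wealth_dist mu pi nu0 t G) * (t%:R^-1)%:E).
Proof.
move=> G_open; apply: gee_EFin_lt => r.
rewrite lteNr -EFinN => /ereal_inf_lt[_ [a Ga <-]].
rewrite lte_fin => a_lt; have e_gt0 : (0 < W a - sup (range W) - r)%R by lra.
apply: limn_einf_ge_near.
apply: filterS2 (nbhs_infty_gt 0) (wealth_dist_ge_near G_open Ga e_gt0).
move=> t t_gt0 nu_ge; apply: eln_div_ge => //; apply: le_trans nu_ge.
by rewrite ler_expR ler_wpM2l //; lra.
Qed.

End WealthDistribution.

Theorem theorem1p1 (R : realType) (n : nat) (hn : (2 <= n)%N)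
  (mu : nat -> 'I_n -> R) (hmu : is_market mu)
  (d : measure_display) (P : measurableType d)
  (pi : P -> ('I_n -> R) -> ('I_n -> R))
  (hpi : forall a, portfolio_map (pi a))
  (hinj : forall a b, (forall p, open_simplex p -> pi a p = pi b p) -> a = b)
  (htb : utotally_bounded pi)
  (hborel : @measurable d P = <<s uopen pi >>)
  (nu0 : probability P R) (hsupp : full_support pi nu0)
  (W : P -> R)
  (hW : forall a, (fun t : nat => ln (relval mu (pi a) t) / t%:R) @ \oo --> W a) :
  LDP pi (wealth_dist mu pi nu0)
      (fun a => sup (range W) - W a).
Proof.
have [mu_simplex [M [M_gt0 mu_ratio]]] := hmu.
split; first exact: (rate_ulsc mu_simplex M_gt0 mu_ratio hpi hW).
split => [F | G].
- exact: (LDP_upper mu_simplex M_gt0 mu_ratio hpi htb hborel hsupp hW).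
- exact: (LDP_lower mu_simplex M_gt0 mu_ratio hpi htb hborel hsupp hW).
Qed.
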